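(* Let $p$ be a prime and let $G$ be a $1$-tuple regular finite group of exponent $p^s$ for some $s\in\mathbb{N}$. Then $\Omega_{s-i}(G)=\mho^i(G)$ for every $i\in\{0,\ldots,s\}$.
   Context: For a finite $p$-group $G$ and $i\ge 0$, $\Omega_i(G)$ is the subgroup generated by all elements of order dividing $p^i$, and $\mho^i(G)$ is the subgroup generated by all $p^i$-th powers of elements of $G$. A finite group $G$ is $1$-tuple regular if for all $g_1,h_1\in G$ of the same order there is a bijection $\Psi\colon G\to G$ such that for every $g\in G$ the assignment $g_1\mapsto h_1, g\mapsto\Psi(g)$ defines an isomorphism $\langle g_1,g\rangle\to\langle h_1,\Psi(g)\rangle$. *)

From mathcomp Require Import all_boot all_fingroup all_solvable.
Set Implicit Arguments. Unset Strict Implicit. Unset Printing Implicit Defensive.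
Local Open Scope group_scope.

Definition one_tuple_regular (gT : finGroupType) (G : {group gT}) : Prop :=
  forall g1 h1 : gT, g1 \in G -> h1 \in G -> #[g1] = #[h1] ->
  exists Psi : gT -> gT,
    [/\ {in G, forall g, Psi g \in G},
        {in G &, injective Psi} &
        {in G, forall g,
           exists f : {morphism <<[set g1; g]>> >-> gT},
             [/\ isom <<[set g1; g]>> <<[set h1; Psi g]>> f,
                 f g1 = h1 & f g = Psi g]}].

From mathcomp Require Import all_boot all_fingroup all_solvable.
Set Implicit Arguments. Unset Strict Implicit. Unset Printing Implicit Defensive.
Local Open Scope group_scope.

(* Let g have order exponent G = p^s. An element y of order p^k has the same
   order as g^(p^(s-k)), and 1-tuple regularity transports the pair
   (g^(p^(s-k)), g) to (y, Psi g) by an isomorphism, so y = (Psi g)^(p^(s-k)).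
   Hence every generator of Omega_(s-i)(G) is a p^i-th power; the inclusion
   Mho^i(G) <= Omega_(s-i)(G) holds in any group of exponent p^s. *)

Section OneTupleRegular.

Variables (gT : finGroupType) (G : {group gT}).
Hypothesis regG : one_tuple_regular G.

Lemma one_tuple_regular_expg g y n :
  g \in G -> y \in G -> #[g ^+ n] = #[y] -> exists2 x, x \in G & y = x ^+ n.
Proof.
move=> Gg Gy ogn_y.
have [Psi [PsiG _ PsiJ]] := regG (groupX n Gg) Gy ogn_y.
have [f [_ f_gn f_g]] := PsiJ g Gg.
have gen_g : g \in <<[set g ^+ n; g]>> by rewrite mem_gen // !inE eqxx orbT.
by exists (Psi g); rewrite ?PsiG // -f_gn -f_g morphX.
Qed.

Lemma one_tuple_regular_root y :
  nilpotent G -> y \in G -> exists2 x, x \in G & y = x ^+ (exponent G %/ #[y]).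
Proof.
move=> nilG Gy; have [g Gg expG] := exponent_witness nilG.
apply: (one_tuple_regular_expg Gg Gy).
have y_dv_exp : #[y] %| exponent G by apply: dvdn_exponent.
rewrite orderXdiv -expG ?dvdn_div // divnA // mulKn //.
exact: exponent_gt0.
Qed.

End OneTupleRegular.

Lemma Mho_sub_Ohm_exponent (p s i : nat) (gT : finGroupType) (G : {group gT}) :
  p.-group G -> exponent G = (p ^ s)%N -> 'Mho^i(G) \subset 'Ohm_(s - i)(G).
Proof.
move=> pG expG; rewrite (MhoE _ pG) (OhmE _ pG) gen_subG.
apply/subsetP => _ /imsetP[x Gx ->].
rewrite mem_gen // !inE groupX //= -expgM -expnD -maxnE.
rewrite -order_dvdn (dvdn_trans (dvdn_exponent Gx)) // expG.
by rewrite dvdn_exp2l // leq_maxr.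
Qed.

Lemma Ohm_sub_Mho_one_tuple_regular (p s i : nat) (gT : finGroupType)
    (G : {group gT}) :
  p.-group G -> exponent G = (p ^ s)%N -> one_tuple_regular G -> i <= s ->
  'Ohm_(s - i)(G) \subset 'Mho^i(G).
Proof.
move=> pG expG regG le_i_s; rewrite (OhmE _ pG) gen_subG.
apply/subsetP => y; rewrite !inE => /andP[Gy /eqP y_pow].
have [x Gx ->] := one_tuple_regular_root regG (pgroup_nil pG) Gy.
have y_dv : #[y] %| p ^ (s - i) by rewrite order_dvdn y_pow.
rewrite expG -(subnKC le_i_s) expnD -muln_divA // mulnC expgM.
by rewrite Mho_p_elt ?groupX // (mem_p_elt pG) ?groupX.
Qed.

Theorem lemma4p3 (p : nat) (gT : finGroupType) (G : {group gT}) (s : nat) :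
  prime p -> exponent G = (p ^ s)%N -> one_tuple_regular G ->
  forall i : nat, i <= s -> 'Ohm_(s - i)(G) = 'Mho^i(G).
Proof.
move=> p_pr expG regG i le_i_s.
have pG : p.-group G by rewrite -pnat_exponent expG pnatX (pnat_id p_pr).
apply/eqP; rewrite eqEsubset.
by rewrite (Ohm_sub_Mho_one_tuple_regular pG) // (Mho_sub_Ohm_exponent _ pG).
Qed.
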